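(* Let $1\le q\le p<\infty$. The operator ideal $\Pi^{mid}_{p;q}$ of absolutely mid $(p;q)$-summing operators is injective, and the operator ideals $W^{mid}_{p;q}$ of weakly mid $(p;q)$-summing operators and $\mathcal{D}^{mid}_p$ of Cohen mid $p$-summing operators are regular.
   Context: For a Banach space $X$: $\ell_r(X)$ absolutely $r$-summable sequences; $\ell_r^w(X)$ sequences with $\sup_{x^*\in B_{X^*}}\|(x^*(x_j))_j\|_r<\infty$; $\ell_r^{mid}(X)$ ($r<\infty$) the $(x_j)\in\ell_r^w(X)$ with $\sum_n\sum_j|x_n^*(x_j)|^r<\infty$ for all $(x_n^* )\in\ell_r^w(X^* )$; $\ell_p\langle X\rangle$ the $(x_j)$ with $\sup_{(x_j^* )\in B_{\ell_{p^*}^w(X^* )}}\sum_j|x_j^*(x_j)|<\infty$, $1/p+1/p^*=1$. A bounded linear $T\colon E\to F$ is absolutely mid $(p;q)$-summing if $(T(x_j))\in\ell_p(F)$ whenever $(x_j)\in\ell_q^{mid}(E)$; weakly mid $(p;q)$-summing if $(T(x_j))\in\ell_p^{mid}(F)$ whenever $(x_j)\in\ell_q^w(E)$; Cohen mid $p$-summing if $(T(x_j))\in\ell_p\langle F\rangle$ whenever $(x_j)\in\ell_p^{mid}(E)$. An operator ideal $\mathcal{I}$ is injective if $u\in\mathcal{I}(E,F)$ whenever $v\in\mathcal{L}(F,G)$ is a metric injection ($\|v(y)\|=\|y\|$ for all $y$) with $v\circ u\in\mathcal{I}(E,G)$; it is regular if $u\in\mathcal{I}(E,F)$ whenever $J_F\circ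 u\in\mathcal{I}(E,F^{**})$, $J_F\colon F\to F^{**}$ the canonical embedding. *)

From HB Require Import structures.
From mathcomp Require Import all_boot all_order all_algebra.
From mathcomp Require Import all_classical all_reals all_analysis.
Unset Implicit Arguments. Unset Strict Implicit. Unset Printing Implicit Defensive.
Import Order.TTheory GRing.Theory Num.Theory.
Import numFieldNormedType.Exports.
Local Open Scope classical_set_scope.
Local Open Scope ring_scope.

(* A normed space presented concretely: a carrier vector space, the subspace
   of its elements forming the space, and the norm.  This lets us form duals
   (and biduals, triduals, ...) as spaces of functions without re-proving the
   normed-module axioms. *)
Record nspace (R : realType) := NSpace {
  ncar : lmodType R;
  nmem : set ncar;
  nnorm : ncar -> R }.
Arguments NSpace {R} ncar nmem nnorm.
Arguments ncar {R} n.
Arguments nmem {R} n _.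
Arguments nnorm {R} n _.

Section defs.
Context {R : realType}.

Definition lin_on (U V : lmodType R) (S : set U) (f : U -> V) : Prop :=
  forall (a : R) (x y : U), S x -> S y -> f (a *: x + y) = a *: f x + f y.

Definition dual_mem (X : nspace R) : set (ncar X -> R^o) :=
  fun f => lin_on _ _ (nmem X) f /\
    exists C : R, forall x, nmem X x -> `|f x| <= C * nnorm X x.

Definition dual_norm (X : nspace R) (f : ncar X -> R^o) : R :=
  sup [set `|f x| | x in [set x | nmem X x /\ nnorm X x <= 1]].

Definition dual (X : nspace R) : nspace R :=
  NSpace (ncar X -> R^o) (dual_mem X) (dual_norm X).

Definition dual_ball (X : nspace R) : set (ncar X -> R^o) :=
  [set f | dual_mem X f /\ dual_norm X f <= 1].

Definition bspace (E : normedModType R) : nspace R :=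
  NSpace E setT (fun x => `|x|).

Definition bidual_emb (X : nspace R) (y : ncar X) : ncar (dual (dual X)) :=
  fun f : ncar X -> R^o => f y.

Definition bop (X Y : nspace R) (u : ncar X -> ncar Y) : Prop :=
  (forall x, nmem X x -> nmem Y (u x)) /\ lin_on _ _ (nmem X) u /\
  exists C : R, forall x, nmem X x -> nnorm Y (u x) <= C * nnorm X x.

Definition metric_injection (X Y : nspace R) (v : ncar X -> ncar Y) : Prop :=
  bop X Y v /\ forall y, nmem X y -> nnorm Y (v y) = nnorm X y.

Definition conj_exp (p : R) : \bar R :=
  if p == 1 then +oo%E else (p / (p - 1))%:E.

(* ||(x_j)||_{w,r} <= C : for all x^* in B_{X^*}, ||(x^*(x_j))_j||_r <= C *)
Definition weak_bound (X : nspace R) (r : \bar R) (x : nat -> ncar X) (C : R)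
  : Prop :=
  forall f, dual_ball X f ->
    match r with
    | r'%:E => forall N : nat, (\sum_(j < N) `|f (x j)| `^ r') `^ r'^-1 <= C
    | +oo%E => forall j, `|f (x j)| <= C
    | -oo%E => False
    end.

Definition lp_seq (X : nspace R) (r : R) (x : nat -> ncar X) : Prop :=
  (forall j, nmem X (x j)) /\
  exists M : R, forall N : nat, \sum_(j < N) nnorm X (x j) `^ r <= M.

Definition lw_seq (X : nspace R) (r : \bar R) (x : nat -> ncar X) : Prop :=
  (forall j, nmem X (x j)) /\ exists C : R, weak_bound X r x C.

Definition lmid_seq (X : nspace R) (r : R) (x : nat -> ncar X) : Prop :=
  lw_seq X r%:E x /\
  forall xs : nat -> ncar (dual X), lw_seq (dual X) r%:E xs ->
    exists M : R, forall N K : nat,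
      \sum_(n < N) \sum_(j < K) `|xs n (x j)| `^ r <= M.

Definition cohen_seq (X : nspace R) (p : R) (x : nat -> ncar X) : Prop :=
  (forall j, nmem X (x j)) /\
  exists M : R, forall ys : nat -> ncar (dual X),
    lw_seq (dual X) (conj_exp p) ys ->
    weak_bound (dual X) (conj_exp p) ys 1 ->
    forall N : nat, \sum_(j < N) `|ys j (x j)| <= M.

Definition abs_mid_summing (p q : R) (X Y : nspace R) (u : ncar X -> ncar Y)
  : Prop :=
  bop X Y u /\ forall x, lmid_seq X q x -> lp_seq Y p (u \o x).

Definition weak_mid_summing (p q : R) (X Y : nspace R) (u : ncar X -> ncar Y)
  : Prop :=
  bop X Y u /\ forall x, lw_seq X q%:E x -> lmid_seq Y p (u \o x).

Definition cohen_mid_summing (p : R) (X Y : nspace R) (u : ncar X -> ncar Y)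
  : Prop :=
  bop X Y u /\ forall x, lmid_seq X p x -> cohen_seq Y p (u \o x).

End defs.

From HB Require Import structures.
From mathcomp Require Import all_boot all_order all_algebra.
From mathcomp Require Import all_classical all_reals all_analysis.
From mathcomp Require Import ring.
Import Order.TTheory GRing.Theory Num.Theory.
Import numFieldNormedType.Exports.
Local Open Scope ring_scope.
Local Open Scope classical_set_scope.

Set Implicit Arguments.
Unset Strict Implicit.
Unset Printing Implicit Defensive.

(* Injectivity is immediate, since a metric injection preserves the norms
   entering the definition.  For regularity, the canonical embedding
   J : F -> F** preserves the weak norms of sequences: every element of the
   unit ball of F*** restricts along J to an element of the unit ball of F*,
   the restriction being linear because an element of F** vanishing on F* has
   norm zero.  As (J_{F*} g) (J_F y) = g y, the conditions on J o u tested
   against J_{F*} o (g_n) are exactly those on u tested against (g_n). *)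

Section Duality.
Context {R : realType}.

Definition wf_nspace (X : nspace R) : Prop :=
  [/\ nmem X 0,
      forall (a : R) x y, nmem X x -> nmem X y -> nmem X (a *: x + y),
      forall (a : R) x, nmem X x -> nnorm X (a *: x) <= `|a| * nnorm X x &
      forall x, nmem X x -> 0 <= nnorm X x].

Lemma wf_bspace (E : normedModType R) : wf_nspace (bspace E).
Proof. by split => //= a x _; rewrite normrZ. Qed.

Lemma wf_nnorm0 (X : nspace R) : wf_nspace X -> nnorm X 0 = 0.
Proof.
move=> [h0 _ hZ hge0]; apply/eqP; rewrite eq_le hge0 // andbT.
by have := hZ 0 0 h0; rewrite scale0r normr0 mul0r.
Qed.

Lemma lin_on0 (U V : lmodType R) (S : set U) (f : U -> V) :
  lin_on U V S f -> S 0 -> f 0 = 0.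
Proof.
move=> hf h0; apply: (addrI (f 0)); rewrite addr0.
by have := hf 1 0 0 h0 h0; rewrite !scale1r addr0 => <-.
Qed.

Lemma lin_onZ (U V : lmodType R) (S : set U) (f : U -> V) a x :
  lin_on U V S f -> S 0 -> S x -> f (a *: x) = a *: f x.
Proof.
by move=> hf h0 hx; have := hf a x 0 hx h0; rewrite (lin_on0 hf h0) !addr0.
Qed.

Lemma dual_lincombE (X : nspace R) (a : R) (f g : ncar (dual X)) x :
  (a *: f + g) x = a * f x + g x.
Proof. by []. Qed.

Lemma dual_norm_le (X : nspace R) (f : ncar (dual X)) (C : R) : 0 <= C ->
  (forall x, nmem X x -> nnorm X x <= 1 -> `|f x| <= C) -> dual_norm X f <= C.
Proof.
move=> C0 hC; rewrite /dual_norm.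
set E := [set `|f x| | x in _].
have [->|/set0P E0] := eqVneq E set0; first by rewrite sup0.
by apply: ge_sup => // _ [x [hx hx1] <-]; exact: hC.
Qed.

Lemma dual_norm_ub (X : nspace R) (f : ncar (dual X)) x :
  wf_nspace X -> dual_mem X f -> nmem X x -> nnorm X x <= 1 ->
  `|f x| <= dual_norm X f.
Proof.
move=> [_ _ _ hge0] [_ [C hC]] hx hx1.
apply: ub_le_sup; last by exists x.
exists `|C| => _ [y [hy hy1] <-]; apply: le_trans (hC _ hy) _.
apply: le_trans (ler_norm _) _; rewrite normrM [`|nnorm _ _|]ger0_norm ?hge0 //.
by rewrite ler_piMr.
Qed.

Lemma dual_norm_ge0 (X : nspace R) (f : ncar (dual X)) :
  wf_nspace X -> dual_mem X f -> 0 <= dual_norm X f.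
Proof.
move=> hX hf; have [h0 _ _ _] := hX; have [hl _] := hf.
by have := dual_norm_ub hX hf h0; rewrite wf_nnorm0 // (lin_on0 hl h0) normr0; apply.
Qed.

Lemma normf_le_dual_norm (X : nspace R) (f : ncar (dual X)) x :
  wf_nspace X -> dual_mem X f -> nmem X x ->
  `|f x| <= dual_norm X f * nnorm X x.
Proof.
move=> hX hf hx; have [h0 hD hZ hge0] := hX; have [hl [C hC]] := hf.
have := hge0 _ hx; rewrite le_eqVlt => /orP[/eqP x0|xpos].
  by have := hC _ hx; rewrite -x0 !mulr0.
set t := nnorm X x in xpos *.
have hxt : nmem X (t^-1 *: x) by rewrite -[_ *: x]addr0; exact: hD.
have hxt1 : nnorm X (t^-1 *: x) <= 1.
  by apply: le_trans (hZ _ _ hx) _; rewrite gtr0_norm ?invr_gt0 ?mulVf ?gt_eqF.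
have := dual_norm_ub hX hf hxt hxt1.
rewrite (lin_onZ _ hl h0 hx) normrM gtr0_norm ?invr_gt0 //.
by move=> h; rewrite mulrC -ler_pdivrMl.
Qed.

Lemma wf_nspace_dual (X : nspace R) : wf_nspace X -> wf_nspace (dual X).
Proof.
move=> hX; split.
- split; first by move=> a x y _ _; rewrite /= /GRing.scale /= mulr0 addr0.
  by exists 0 => x _; rewrite normr0 mul0r.
- move=> a f g [hfl [Cf hCf]] [hgl [Cg hCg]]; split.
    move=> b x y hx hy.
    by rewrite !dual_lincombE hfl // hgl // /GRing.scale /=; ring.
  exists (`|a| * Cf + Cg) => x hx; rewrite dual_lincombE.
  apply: le_trans (ler_normD _ _) _.
  rewrite normrM mulrDl -mulrA lerD ?hCg //.
  by rewrite ler_wpM2l ?hCf.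
- move=> a f hf; apply: dual_norm_le; first by rewrite mulr_ge0 ?dual_norm_ge0.
  move=> x hx hx1; rewrite [_ x]/= normrM ler_wpM2l //.
  exact: dual_norm_ub.
- by move=> f hf; exact: dual_norm_ge0.
Qed.

Lemma bidual_emb_mem (X : nspace R) y : wf_nspace X -> nmem X y ->
  dual_mem (dual X) (bidual_emb X y).
Proof.
move=> hX hy; split => //.
by exists (nnorm X y) => f hf; rewrite mulrC; exact: normf_le_dual_norm hX hf hy.
Qed.

Lemma dual_norm_bidual_emb (X : nspace R) y : wf_nspace X -> nmem X y ->
  dual_norm (dual X) (bidual_emb X y) <= nnorm X y.
Proof.
move=> hX hy; have [_ _ _ hge0] := hX.
apply: dual_norm_le (hge0 _ hy) _ => f hf hf1.
apply: le_trans (normf_le_dual_norm hX hf hy) _.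
by rewrite ler_piMl ?hge0.
Qed.

Lemma bidual_emb_dual_ball (X : nspace R) f : wf_nspace X ->
  dual_ball X f -> dual_ball (dual (dual X)) (bidual_emb (dual X) f).
Proof.
move=> hX [hf hf1]; have hX' := wf_nspace_dual hX; split.
  exact: bidual_emb_mem.
exact: le_trans (dual_norm_bidual_emb hX' hf) hf1.
Qed.

Lemma dual_vanishing_eq0 (X : nspace R) (Psi : ncar (dual (dual X))) phi :
  wf_nspace X -> dual_mem (dual X) Psi -> nmem (dual X) phi ->
  (forall x, nmem X x -> phi x = 0) -> Psi phi = 0.
Proof.
move=> hX hPsi hphi phi0; have hX' := wf_nspace_dual hX.
apply/normr0_eq0/eqP; rewrite eq_le normr_ge0 andbT.
apply: le_trans (normf_le_dual_norm hX' hPsi hphi) _.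
rewrite mulr_ge0_le0 ?dual_norm_ge0 //.
by apply: dual_norm_le => // x hx _; rewrite phi0 ?normr0.
Qed.

Lemma lin_on_comp_bidual_emb (X : nspace R) (Psi : ncar (dual (dual (dual X)))) :
  wf_nspace X -> dual_mem (dual (dual X)) Psi ->
  lin_on _ _ (nmem X) (Psi \o bidual_emb X).
Proof.
(* J is linear only against linear functionals, so the defect of linearity of
   J is an element of X** vanishing on X*. *)
move=> hX hPsi a x y hx hy /=; have [_ hD _ _] := hX.
have [_ hD' _ _] := wf_nspace_dual (wf_nspace_dual hX).
have [hl _] := hPsi.
set A := bidual_emb X (a *: x + y).
set B := a *: bidual_emb X x + bidual_emb X y.
have hB : nmem (dual (dual X)) B by apply: hD'; exact: bidual_emb_mem.
have hAB : nmem (dual (dual X)) ((-1) *: B + A).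
  by apply: hD' => //; apply: bidual_emb_mem => //; exact: hD.
have -> : A = 1 *: ((-1) *: B + A) + B by rewrite scale1r scaleN1r addrC addNKr.
rewrite hl // (dual_vanishing_eq0 (wf_nspace_dual hX) hPsi hAB); last first.
  move=> f [hfl _]; rewrite /A /B /bidual_emb !dual_lincombE hfl //.
  by rewrite /GRing.scale /= mulN1r addNr.
by rewrite /GRing.scale /= mul1r add0r hl //; exact: bidual_emb_mem.
Qed.

Lemma dual_ball_comp_bidual_emb (X : nspace R) Psi : wf_nspace X ->
  dual_ball (dual (dual X)) Psi -> dual_ball X (Psi \o bidual_emb X).
Proof.
move=> hX [hPsi hPsi1].
have hX2 := wf_nspace_dual (wf_nspace_dual hX).
have hbound x : nmem X x -> `|Psi (bidual_emb X x)| <= nnorm X x.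
  move=> hx; have hJx := bidual_emb_mem hX hx.
  apply: le_trans (normf_le_dual_norm hX2 hPsi hJx) _.
  rewrite -[leRHS]mul1r ler_pM ?dual_norm_ge0 ?dual_norm_bidual_emb //.
  exact: wf_nspace_dual.
split; last by apply: dual_norm_le => // x hx hx1; exact: le_trans (hbound _ hx) hx1.
split; first exact: lin_on_comp_bidual_emb.
by exists 1 => x hx; rewrite mul1r; exact: hbound.
Qed.

Lemma weak_bound_bidual_emb {X : nspace R} {r x C} : wf_nspace X ->
  weak_bound (dual (dual X)) r (bidual_emb X \o x) C <-> weak_bound X r x C.
Proof.
move=> hX; split => hw f hf.
  exact: hw _ (bidual_emb_dual_ball hX hf).
exact: hw _ (dual_ball_comp_bidual_emb hX hf).
Qed.

Lemma lw_seq_bidual_emb (X : nspace R) r x : wf_nspace X ->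
  lw_seq X r x -> lw_seq (dual (dual X)) r (bidual_emb X \o x).
Proof.
move=> hX [hx [C hC]]; split; first by move=> j; exact: bidual_emb_mem.
by exists C; apply/weak_bound_bidual_emb.
Qed.

End Duality.

Section OperatorIdeals.
Context {R : realType}.
Variables (p q : R) (X Y : nspace R) (u : ncar X -> ncar Y).
Hypothesis hu : bop X Y u.

Lemma abs_mid_summing_injective (Z : nspace R) (v : ncar Y -> ncar Z) :
  metric_injection Y Z v -> abs_mid_summing p q X Z (v \o u) ->
  abs_mid_summing p q X Y u.
Proof.
move=> [_ hv] [_ hvu]; split => // x hx.
have [_ [M hM]] := hvu x hx; have [hux _] := hu.
have hxm : forall j, nmem X (x j) by case: hx => -[].
split; first by move=> j; apply: hux.
exists M => N.
have -> : \sum_(j < N) nnorm Y ((u \o x) j) `^ p =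
          \sum_(j < N) nnorm Z ((v \o u \o x) j) `^ p.
  by apply: eq_bigr => j _; rewrite /= hv //; exact/hux/hxm.
exact: hM.
Qed.

Hypothesis hY : wf_nspace Y.

Lemma weak_mid_summing_regular :
  weak_mid_summing p q X (dual (dual Y)) (bidual_emb Y \o u) ->
  weak_mid_summing p q X Y u.
Proof.
move=> [_ hJu]; split => // x hx.
have [[_ [C hC]] hmid] := hJu x hx; have [hux _] := hu.
split.
  split; first by move=> j; apply: hux; case: hx.
  by exists C; exact: (weak_bound_bidual_emb hY).1.
by move=> ys hys; exact: hmid _ (lw_seq_bidual_emb (wf_nspace_dual hY) hys).
Qed.

Lemma cohen_mid_summing_regular :
  cohen_mid_summing p X (dual (dual Y)) (bidual_emb Y \o u) ->
  cohen_mid_summing p X Y u.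
Proof.
move=> [_ hJu]; split => // x hx.
have [_ [M hM]] := hJu x hx; have [hux _] := hu; have hY' := wf_nspace_dual hY.
split; first by move=> j; apply: hux; case: hx => -[].
exists M => ys hys hys1 N.
apply: (hM (bidual_emb (dual Y) \o ys)).
- exact: lw_seq_bidual_emb.
- exact: (weak_bound_bidual_emb hY').2.
Qed.

End OperatorIdeals.

Theorem proposition2p8 (R : realType) (p q : R) (hq : 1 <= q) (hqp : q <= p) :
  (* Pi^mid_{p;q} is injective *)
  (forall (E F G : completeNormedModType R) (u : E -> F) (v : F -> G),
     bop (bspace E) (bspace F) u ->
     metric_injection (bspace F) (bspace G) v ->
     abs_mid_summing p q (bspace E) (bspace G) (v \o u) ->
     abs_mid_summing p q (bspace E) (bspace F) u) /\
  (* W^mid_{p;q} is regular *)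
  (forall (E F : completeNormedModType R) (u : E -> F),
     bop (bspace E) (bspace F) u ->
     weak_mid_summing p q (bspace E) (dual (dual (bspace F)))
       (bidual_emb (bspace F) \o u) ->
     weak_mid_summing p q (bspace E) (bspace F) u) /\
  (* D^mid_p is regular *)
  (forall (E F : completeNormedModType R) (u : E -> F),
     bop (bspace E) (bspace F) u ->
     cohen_mid_summing p (bspace E) (dual (dual (bspace F)))
       (bidual_emb (bspace F) \o u) ->
     cohen_mid_summing p (bspace E) (bspace F) u).
Proof.
split; [|split].
- by move=> E F G u v hu; exact: abs_mid_summing_injective.
- by move=> E F u hu; exact: weak_mid_summing_regular (wf_bspace F).
- by move=> E F u hu; exact: cohen_mid_summing_regular (wf_bspace F).
Qed.
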